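(* Let $(x_n,y_n)_{n\in\mathbb Z}$ and $(x'_n,y'_n)_{n\in\mathbb Z}$ be two elliptic sequences in general position on the same biquadratic polynomial $F$. For integers $m\ge1$, $r,s$, let $Q_{m,r,s}(y)=\dfrac{(y-y_r)\cdots(y-y_{r+m-1})}{(y-y'_s)\cdots(y-y'_{s+m-1})}$. Then there exist a constant $C^\dagger_{m,r,s}$ and a polynomial $D^\dagger_{m,r,s}$ of degree at most $2$ such that, as rational functions of $x$, $$\mathcal D^\dagger Q_{m,r,s}(x)=C^\dagger_{m,r,s}X_2(x)\frac{(x-x_{r+1})\cdots(x-x_{r+m-1})}{(x-x'_s)(x-x'_{s+1})\cdots(x-x'_{s+m})},\qquad \mathcal M^\dagger Q_{m,r,s}(x)=D^\dagger_{m,r,s}(x)\frac{(x-x_{r+1})\cdots(x-x_{r+m-1})}{(x-x'_s)\cdots(x-x'_{s+m})}.$$ Moreover $C^\dagger_{1,r,s}=\dfrac{y'_s-y_r}{Y_2(y'_s)}$ and $D^\dagger_{1,r,s}(x)=\dfrac{X_0(x)+(y_r+y'_s)X_1(x)/2+y_ry'_sX_2(x)}{Y_2(y'_s)}$.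
   Context: $F(x,y)=\sum_{i,j=0}^2c_{i,j}x^iy^j=Y_0(y)+xY_1(y)+x^2Y_2(y)=X_0(x)+yX_1(x)+y^2X_2(x)$. An elliptic sequence on $F$ is $(x_n,y_n)_{n\in\mathbb Z}$ such that for every $n$, $x_n,x_{n+1}$ are the two roots of $F(\cdot,y_n)$ and $y_{n-1},y_n$ the two roots of $F(x_n,\cdot)$; general position: all $x_n,x'_n$ distinct, all $y_n,y'_n$ distinct, $X_2,Y_2$ nonvanishing there. For a rational function $g$ of $y$ and a value $x$ with $y^\pm$ the two roots of $F(x,y)=0$: $(\mathcal D^\dagger g)(x)=-\frac{g(y^+)-g(y^-)}{y^+-y^-}$, $(\mathcal M^\dagger g)(x)=\frac{g(y^+)+g(y^-)}2$; on the lattice $(\mathcal D^\dagger g)(x_n)=-\frac{g(y_n)-g(y_{n-1})}{y_n-y_{n-1}}$, $(\mathcal M^\dagger g)(x_n)=\frac{g(y_n)+g(y_{n-1})}2$. Empty products equal $1$. *)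

From HB Require Import structures.
From mathcomp Require Import all_boot all_order all_algebra.
Set Implicit Arguments. Unset Strict Implicit. Unset Printing Implicit Defensive.
Import Order.TTheory GRing.Theory Num.Theory.
Local Open Scope ring_scope.

Section Biquadratic.
Variable R : numClosedFieldType.

Definition bqF (c : 'I_3 -> 'I_3 -> R) (x y : R) : R :=
  \sum_(i < 3) \sum_(j < 3) c i j * x ^+ i * y ^+ j.

(* F = X_0(x) + y X_1(x) + y^2 X_2(x) : X_k = sum_i c_{i,k} x^i *)
Definition Xpol (c : 'I_3 -> 'I_3 -> R) (k : 'I_3) : {poly R} :=
  \poly_(i < 3) c (inord i) k.
(* F = Y_0(y) + x Y_1(y) + x^2 Y_2(y) : Y_k = sum_j c_{k,j} y^j *)
Definition Ypol (c : 'I_3 -> 'I_3 -> R) (k : 'I_3) : {poly R} :=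
  \poly_(j < 3) c k (inord j).

Definition i0 : 'I_3 := inord 0.
Definition i1 : 'I_3 := inord 1.
Definition i2 : 'I_3 := inord 2.

(* elliptic sequence: x_n, x_{n+1} are the two roots of F(., y_n), and
   y_{n-1}, y_n are the two roots of F(x_n, .) (as quadratic polynomials) *)
Definition elliptic_seq (c : 'I_3 -> 'I_3 -> R) (x y : int -> R) : Prop :=
  forall n : int,
    (forall t, bqF c t (y n) = (Ypol c i2).[y n] * (t - x n) * (t - x (n + 1))) /\
    (forall u, bqF c (x n) u = (Xpol c i2).[x n] * (u - y (n - 1)) * (u - y n)).

Definition general_position (c : 'I_3 -> 'I_3 -> R) (x y x' y' : int -> R) : Prop :=
  (forall n k, x n = x k -> n = k) /\ (forall n k, x' n = x' k -> n = k) /\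
  (forall n k, x n <> x' k) /\
  (forall n k, y n = y k -> n = k) /\ (forall n k, y' n = y' k -> n = k) /\
  (forall n k, y n <> y' k) /\
  (forall n, [/\ (Xpol c i2).[x n] != 0, (Xpol c i2).[x' n] != 0,
                (Ypol c i2).[y n] != 0 & (Ypol c i2).[y' n] != 0]).

Definition Qmrs (y y' : int -> R) (m : nat) (r s : int) (u : R) : R :=
  (\prod_(i < m) (u - y (r + i%:Z))) / (\prod_(i < m) (u - y' (s + i%:Z))).

(* D^dagger g and M^dagger g at a point whose two y-roots are yp, ym *)
Definition Ddag (g : R -> R) (yp ym : R) : R := - ((g yp - g ym) / (yp - ym)).
Definition Mdag (g : R -> R) (yp ym : R) : R := (g yp + g ym) / 2.

Definition ratfac (x x' : int -> R) (m : nat) (r s : int) (t : R) : R :=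
  (\prod_(1 <= i < m) (t - x (r + i%:Z))) / (\prod_(j < m.+1) (t - x' (s + j%:Z))).

End Biquadratic.

From HB Require Import structures.
From mathcomp Require Import all_boot all_order all_algebra.
From mathcomp Require Import ring zify.
Set Implicit Arguments.
Unset Strict Implicit.
Unset Printing Implicit Defensive.
Import Order.TTheory GRing.Theory Num.Theory.
Local Open Scope ring_scope.

(* Expand Q_{m,r,s} in partial fractions over its poles a_j = y'_{s+j}.  A single
   pole contributes D^dagger (y - a)^-1 = X_2 / F(x, a) and
   M^dagger (y - a)^-1 = -(X_1 + 2 a X_2) / (2 F(x, a)), and on the elliptic
   sequence F(x, y'_j) = Y_2(y'_j) (x - x'_j) (x - x'_{j+1}).  Over the common
   denominator (x - x'_s) ... (x - x'_{s+m}) this gives D^dagger Q = X_2 N / ... and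
   M^dagger Q = M / ... with deg N < m and deg M <= m + 1.  At x = x_{r+i},
   0 < i < m, the two y-roots y_{r+i-1} and y_{r+i} are zeros of Q, so N and M vanish
   there and are divisible by (x - x_{r+1}) ... (x - x_{r+m-1}); the quotients are a
   constant and a polynomial of degree at most 2.  For m = 1, Q has a single pole and
   the formulas are computed directly. *)

Lemma pfrac_div_pole (R : fieldType) (A a : nat -> R) m u :
  (forall j, (j < m)%N -> a j != a m) -> (forall j, (j <= m)%N -> u != a j) ->
  (\sum_(j < m) A j / (u - a j)) / (u - a m) =
  \sum_(j < m) A j / (a j - a m) / (u - a j)
    - (\sum_(j < m) A j / (a j - a m)) / (u - a m).
Proof.
move=> a_neq u_neq; rewrite !mulr_suml -sumrB; apply: eq_bigr => j _.
have ua_j : u - a j != 0 by rewrite subr_eq0 u_neq // ltnW.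
have ua_m : u - a m != 0 by rewrite subr_eq0 u_neq.
have a_jm : a j - a m != 0 by rewrite subr_eq0 a_neq.
by field; rewrite ua_j ua_m a_jm.
Qed.

Lemma prod_ratio_pfrac (R : fieldType) (b a : nat -> R) m :
  (forall i j, (i < m)%N -> (j < m)%N -> a i = a j -> i = j) ->
  exists A : nat -> R, forall u, (forall j, (j < m)%N -> u != a j) ->
    (\prod_(i < m) (u - b i)) / (\prod_(i < m) (u - a i))
      = 1 + \sum_(j < m) A j / (u - a j).
Proof.
elim: m => [|m IH] a_inj.
  by exists (fun=> 0) => u _; rewrite !big_ord0 divr1 addr0.
have [A HA] := IH (fun i j lt_i lt_j => a_inj i j (leqW lt_i) (leqW lt_j)).
pose d := a m - b m; pose W := \sum_(j < m) A j / (a j - a m).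
exists (fun j => if (j < m)%N then A j + d * (A j / (a j - a m)) else d * (1 - W)).
move=> u u_neq.
have a_neq j : (j < m)%N -> a j != a m.
  move=> lt_jm; apply/eqP => /(a_inj _ _ (leqW lt_jm) (ltnSn m)) eq_jm.
  by rewrite eq_jm ltnn in lt_jm.
have ua_m : u - a m != 0 by rewrite subr_eq0 u_neq.
rewrite !big_ord_recr /= ltnn invfM mulrACA HA => [|j lt_jm]; last exact/u_neq/leqW.
under eq_bigr => j _ do rewrite ltn_ord mulrDl -mulrA.
rewrite big_split -mulr_sumr /=.
(* (u - b m) / (u - a m) = 1 + d / (u - a m); the cross terms are re-expanded by
   pfrac_div_pole. *)
have key := @pfrac_div_pole _ A a m u a_neq u_neq.
have -> : (1 + \sum_(j < m) A j / (u - a j)) * ((u - b m) / (u - a m))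
  = 1 + \sum_(j < m) A j / (u - a j) + d / (u - a m)
    + d * ((\sum_(j < m) A j / (u - a j)) / (u - a m)) by rewrite /d; field.
rewrite key /W; ring.
Qed.

Lemma prod_split2 (T : comNzRingType) (G : nat -> T) m j : (j < m)%N ->
  \prod_(k < m.+1) G k
    = G j * G j.+1 * \prod_(k < m.+1 | (k != j :> nat) && (k != j.+1 :> nat)) G k.
Proof.
move=> lt_jm; have lt_j : (j < m.+1)%N by exact: leqW.
rewrite (bigD1 (Ordinal lt_j)) //= (bigD1 (Ordinal (lt_jm : j.+1 < m.+1)%N)) /=; last first.
  by rewrite -val_eqE /= gtn_eqF.
by rewrite mulrA; congr (_ * _); apply: eq_bigl => k; rewrite -!val_eqE.
Qed.

Lemma size_add_leq (R : nzSemiRingType) n (p q : {poly R}) :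
  (size p <= n)%N -> (size q <= n)%N -> (size (p + q)%R <= n)%N.
Proof. by move=> le_p le_q; rewrite (leq_trans (size_polyD _ _)) // geq_max le_p le_q. Qed.

Lemma size_scale_leqn (R : nzSemiRingType) n (k : R) (p : {poly R}) :
  (size p <= n)%N -> (size (k *: p)%R <= n)%N.
Proof. exact: leq_trans (size_scale_leq _ _). Qed.

Lemma size_sum_leq (R : nzSemiRingType) (I : Type) (r : seq I) (P : pred I)
    (G : I -> {poly R}) n :
  (forall i, P i -> (size (G i) <= n)%N) -> (size (\sum_(i <- r | P i) G i)%R <= n)%N.
Proof. by move=> le_G; elim/big_ind: _ => //; [rewrite size_poly0 | apply: size_add_leq]. Qed.

Lemma uniq_roots_factor_size (R : fieldType) (p : {poly R}) (rs : seq R) k :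
  uniq rs -> all (root p) rs -> (size p <= size rs + k)%N ->
  exists2 q : {poly R}, (size q <= k)%N & p = q * \prod_(z <- rs) ('X - z%:P).
Proof.
move=> rs_uniq rs_roots le_p.
have [q def_p] : exists q, p = q * \prod_(z <- rs) ('X - z%:P).
  by apply: uniq_roots_prod_XsubC => //; rewrite uniq_rootsE.
exists q => //; have [->|q_neq0] := eqVneq q 0; first by rewrite size_poly0.
have prod_neq0 : \prod_(z <- rs) ('X - z%:P) != 0 by exact/monic_neq0/monic_prod_XsubC.
by move: le_p; rewrite def_p size_mul // size_prod_XsubC addnS /= addnC leq_add2l.
Qed.

Lemma sum_ord3 (V : nmodType) (G : 'I_3 -> V) : \sum_(i < 3) G i = G i0 + G i1 + G i2.
Proof.
rewrite !big_ord_recr big_ord0 /= add0r.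
by congr (_ + _ + _); congr G; apply: val_inj; rewrite /= inordK.
Qed.

Section Biquadratic.
Variables (R : numClosedFieldType) (c : 'I_3 -> 'I_3 -> R).

Local Notation F := (bqF c).
Local Notation X0 t := (Xpol c i0).[t].
Local Notation X1 t := (Xpol c i1).[t].
Local Notation X2 t := (Xpol c i2).[t].
Local Notation Y2 u := (Ypol c i2).[u].

Definition yroots (t yp ym : R) : Prop := forall u, F t u = X2 t * (u - yp) * (u - ym).

Lemma horner_Xpol k t : (Xpol c k).[t] = c i0 k + c i1 k * t + c i2 k * t ^+ 2.
Proof.
rewrite /Xpol horner_poly sum_ord3 /i0 /i1 /i2 !inord_val !inordK //.
by rewrite expr0 expr1 mulr1.
Qed.

Lemma size_Xpol k : (size (Xpol c k) <= 3)%N.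
Proof. exact: size_poly. Qed.

Lemma bqF_Xpol t u : F t u = X0 t + X1 t * u + X2 t * u ^+ 2.
Proof.
rewrite /bqF !sum_ord3 !horner_Xpol /i0 /i1 /i2 !inordK //.
by rewrite !expr0 !expr1; ring.
Qed.

Lemma yroots_X1 t yp ym : yroots t yp ym -> X1 t = - X2 t * (yp + ym).
Proof.
move=> roots; have F0 := roots 0; have F1 := roots 1; rewrite !bqF_Xpol in F0 F1.
have -> : X1 t = (X0 t + X1 t * 1 + X2 t * 1 ^+ 2)
                 - (X0 t + X1 t * 0 + X2 t * 0 ^+ 2) - X2 t by ring.
by rewrite F0 F1; ring.
Qed.

Lemma Ddag_lin k (A : nat -> R) (f : nat -> R -> R) m yp ym :
  Ddag (fun u => k + \sum_(j < m) A j * f j u) yp ym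
    = \sum_(j < m) A j * Ddag (f j) yp ym.
Proof.
rewrite /Ddag opprD addrACA subrr add0r -sumrB mulr_suml -sumrN.
by apply: eq_bigr => j _; ring.
Qed.

Lemma Mdag_lin k (A : nat -> R) (f : nat -> R -> R) m yp ym :
  Mdag (fun u => k + \sum_(j < m) A j * f j u) yp ym
    = k + \sum_(j < m) A j * Mdag (f j) yp ym.
Proof.
have -> : \sum_(j < m) A j * Mdag (f j) yp ym
    = (\sum_(j < m) A j * f j yp + \sum_(j < m) A j * f j ym) / 2.
  by rewrite -big_split mulr_suml; apply: eq_bigr => j _; rewrite /Mdag /=; ring.
by rewrite /Mdag /=; field.
Qed.

Lemma yroots_neq t yp ym a : yroots t yp ym -> F t a != 0 -> yp != a /\ ym != a.
Proof.
move=> roots; rewrite roots !mulf_eq0 !negb_or !subr_eq0 => /andP[/andP[_ a_yp] a_ym].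
by rewrite !(eq_sym _ a).
Qed.

Lemma Ddag_pole t yp ym a : yroots t yp ym -> yp != ym -> F t a != 0 ->
  Ddag (fun u => (u - a)^-1) yp ym = X2 t / F t a.
Proof.
move=> roots yp_ym.
rewrite roots !mulf_eq0 !negb_or !subr_eq0 => /andP[/andP[X2t a_yp] a_ym].
by rewrite /Ddag; field; rewrite X2t !subr_eq0 yp_ym -!(eq_sym a) a_yp a_ym.
Qed.

Lemma Mdag_pole t yp ym a : yroots t yp ym -> yp != ym -> F t a != 0 ->
  Mdag (fun u => (u - a)^-1) yp ym = - (X1 t + 2 * a * X2 t) / (2 * F t a).
Proof.
move=> roots yp_ym; rewrite (yroots_X1 roots) roots.
rewrite !mulf_eq0 !negb_or !subr_eq0 => /andP[/andP[X2t a_yp] a_ym].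
by rewrite /Mdag; field; rewrite X2t !subr_eq0 -!(eq_sym a) a_yp a_ym.
Qed.

Section Pole_expansion.
Variables (xp a : nat -> R) (m : nat).
Hypothesis Y2_a_neq0 : forall j, (j < m)%N -> Y2 (a j) != 0.
Hypothesis F_a : forall t j, (j < m)%N ->
  F t (a j) = Y2 (a j) * (t - xp j) * (t - xp j.+1).

Local Notation node_prod := (\prod_(k < m.+1) ('X - (xp k)%:P)).

Definition pair_cofactor (j : nat) : {poly R} :=
  \prod_(k < m.+1 | (k != j :> nat) && (k != j.+1 :> nat)) ('X - (xp k)%:P).

Definition Ddag_num (A : nat -> R) : {poly R} :=
  \sum_(j < m) (A j / Y2 (a j)) *: pair_cofactor j.

Definition Mdag_num (A : nat -> R) : {poly R} :=
  node_prod - \sum_(j < m) (A j / (2 * Y2 (a j))) *: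
                ((Xpol c i1 + (2 * a j) *: Xpol c i2) * pair_cofactor j).

Lemma horner_node_prod t : node_prod.[t] = \prod_(k < m.+1) (t - xp k).
Proof. by rewrite horner_prod; apply: eq_bigr => k _; rewrite hornerXsubC. Qed.

Lemma node_prod_split t j : (j < m)%N ->
  \prod_(k < m.+1) (t - xp k) = (t - xp j) * (t - xp j.+1) * (pair_cofactor j).[t].
Proof.
move=> lt_jm; rewrite (prod_split2 (fun k => t - xp k) lt_jm) horner_prod.
by congr (_ * _); apply: eq_bigr => k _; rewrite hornerXsubC.
Qed.

Lemma size_node_prod : size node_prod = m.+2.
Proof.
rewrite -(big_mkord xpredT (fun k => 'X - (xp k)%:P)) size_prod_XsubC.
by rewrite /index_iota subn0 size_iota.
Qed.

Lemma size_pair_cofactor j : (j < m)%N -> size (pair_cofactor j) = m.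
Proof.
move=> lt_jm; have := size_node_prod.
rewrite (prod_split2 (fun k => 'X - (xp k)%:P) lt_jm) -/(pair_cofactor j).
have [->|cof_neq0] := eqVneq (pair_cofactor j) 0; first by rewrite mulr0 size_poly0.
by rewrite !size_mul ?mulf_neq0 ?polyXsubC_eq0 // !size_XsubC; case.
Qed.

Lemma size_Ddag_num A : (size (Ddag_num A) <= m)%N.
Proof. by apply: size_sum_leq => j _; rewrite size_scale_leqn // size_pair_cofactor. Qed.

Lemma size_Mdag_num A : (size (Mdag_num A) <= m.+2)%N.
Proof.
rewrite size_add_leq ?size_node_prod // size_polyN.
apply: size_sum_leq => j _; rewrite size_scale_leqn //.
rewrite (leq_trans (size_polyMleq _ _)) // size_pair_cofactor //.
have : (size (Xpol c i1 + (2 * a j) *: Xpol c i2)%R <= 3)%N.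
  by rewrite size_add_leq ?size_scale_leqn ?size_Xpol.
by move=> le3; apply: (@leq_trans (3 + m).-1); rewrite // -!subn1 leq_sub2r // leq_add2r.
Qed.

Section Admissible_point.
Variable t : R.
Hypothesis t_neq_xp : forall k, (k <= m)%N -> t != xp k.

Lemma node_prod_neq0 : \prod_(k < m.+1) (t - xp k) != 0.
Proof. by apply/prodf_neq0 => k _; rewrite subr_eq0 t_neq_xp // -ltnS. Qed.

Lemma F_a_neq0 j : (j < m)%N -> F t (a j) != 0.
Proof.
move=> lt_jm; rewrite F_a // !mulf_neq0 ?Y2_a_neq0 // subr_eq0 t_neq_xp //.
exact: ltnW.
Qed.

Lemma inv_F_a j : (j < m)%N ->
  (F t (a j))^-1 = (pair_cofactor j).[t] / (Y2 (a j) * \prod_(k < m.+1) (t - xp k)).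
Proof.
move=> lt_jm; have := node_prod_neq0; rewrite (node_prod_split t lt_jm) F_a //.
rewrite !mulf_eq0 !negb_or => /andP[/andP[t_xj t_xj1] cof_neq0].
by field; rewrite Y2_a_neq0 // t_xj t_xj1 cof_neq0.
Qed.

Lemma Ddag_pfrac (A : nat -> R) yp ym : yroots t yp ym -> yp != ym ->
  Ddag (fun u => 1 + \sum_(j < m) A j / (u - a j)) yp ym
    = X2 t * (Ddag_num A).[t] / \prod_(k < m.+1) (t - xp k).
Proof.
move=> roots yp_ym.
rewrite (Ddag_lin 1 A (fun j u => (u - a j)^-1)) /Ddag_num horner_sum.
rewrite mulr_sumr mulr_suml; apply: eq_bigr => j _.
rewrite (Ddag_pole roots) ?F_a_neq0 // inv_F_a // hornerZ.
by field; rewrite Y2_a_neq0 // node_prod_neq0.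
Qed.

Lemma Mdag_pfrac (A : nat -> R) yp ym : yroots t yp ym -> yp != ym ->
  Mdag (fun u => 1 + \sum_(j < m) A j / (u - a j)) yp ym
    = (Mdag_num A).[t] / \prod_(k < m.+1) (t - xp k).
Proof.
move=> roots yp_ym.
rewrite (Mdag_lin 1 A (fun j u => (u - a j)^-1)) /Mdag_num hornerD hornerN.
rewrite horner_node_prod mulrDl divff ?node_prod_neq0 // horner_sum -sumrN mulr_suml.
congr (1 + _); apply: eq_bigr => j _.
rewrite (Mdag_pole roots) ?F_a_neq0 // invfM inv_F_a // !hornerE /=.
by field; rewrite Y2_a_neq0 // node_prod_neq0.
Qed.

End Admissible_point.
End Pole_expansion.

Section Elliptic_pair.
Variables (x y x' y' : int -> R).
Hypotheses (ell : elliptic_seq c x y) (ell' : elliptic_seq c x' y').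
Hypotheses (x_inj : injective x) (y_inj : injective y) (y'_inj : injective y').
Hypothesis x_neq_x' : forall n k, x n <> x' k.
Hypothesis X2_x_neq0 : forall n, X2 (x n) != 0.
Hypothesis Y2_y'_neq0 : forall n, Y2 (y' n) != 0.
Variables (r s : int).

Lemma yroots_x n : yroots (x n) (y (n - 1)) (y n).
Proof. by have [_] := ell n. Qed.

Lemma F_y' t j : F t (y' (s + j%:Z))
  = Y2 (y' (s + j%:Z)) * (t - x' (s + j%:Z)) * (t - x' (s + j.+1%:Z)).
Proof. by have [-> _] := ell' (s + j%:Z); rewrite -addrA (addrC _ 1) -intS. Qed.

Lemma Qmrs_pfrac m : exists A : nat -> R, forall u,
  (forall j, (j < m)%N -> u != y' (s + j%:Z)) ->
  Qmrs y y' m r s u = 1 + \sum_(j < m) A j / (u - y' (s + j%:Z)).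
Proof.
have y'_shift_inj i j : (i < m)%N -> (j < m)%N -> y' (s + i%:Z) = y' (s + j%:Z) -> i = j.
  by move=> _ _ /y'_inj /addrI [].
exact: (@prod_ratio_pfrac _ (fun i => y (r + i%:Z)) (fun j => y' (s + j%:Z)) m y'_shift_inj).
Qed.

Definition Qmrs_dagger_repr m (N M : {poly R}) : Prop :=
  forall t yp ym, yroots t yp ym -> yp != ym ->
  (forall j, (j <= m)%N -> t != x' (s + j%:Z)) ->
  Ddag (Qmrs y y' m r s) yp ym = X2 t * N.[t] / \prod_(j < m.+1) (t - x' (s + j%:Z)) /\
  Mdag (Qmrs y y' m r s) yp ym = M.[t] / \prod_(j < m.+1) (t - x' (s + j%:Z)).

Lemma Qmrs_dagger_num m : exists N M : {poly R},
  [/\ (size N <= m)%N, (size M <= m.+2)%N & Qmrs_dagger_repr m N M].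
Proof.
pose xp k := x' (s + k%:Z); pose a j := y' (s + j%:Z).
have Y2_a j : (j < m)%N -> Y2 (a j) != 0 by move=> _; apply: Y2_y'_neq0.
have F_a t j : (j < m)%N -> F t (a j) = Y2 (a j) * (t - xp j) * (t - xp j.+1).
  by move=> _; apply: F_y'.
have [A Q_pfrac] := Qmrs_pfrac m.
exists (Ddag_num xp a m A), (Mdag_num xp a m A).
split; [exact: size_Ddag_num | exact: size_Mdag_num |].
move=> t yp ym roots yp_ym t_neq.
have poles j : (j < m)%N -> yp != a j /\ ym != a j.
  by move=> lt_jm; apply: yroots_neq roots (F_a_neq0 Y2_a F_a t_neq lt_jm).
have -> : Ddag (Qmrs y y' m r s) yp ym
    = Ddag (fun u => 1 + \sum_(j < m) A j / (u - a j)) yp ym.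
  by rewrite /Ddag !Q_pfrac // => j /poles[].
have -> : Mdag (Qmrs y y' m r s) yp ym
    = Mdag (fun u => 1 + \sum_(j < m) A j / (u - a j)) yp ym.
  by rewrite /Mdag !Q_pfrac // => j /poles[].
by split; [apply: Ddag_pfrac | apply: Mdag_pfrac].
Qed.

Lemma Qmrs_y m k : (k < m)%N -> Qmrs y y' m r s (y (r + k%:Z)) = 0.
Proof.
move=> lt_km; apply/eqP; rewrite mulf_eq0; apply/orP; left.
by apply/prodf_eq0; exists (Ordinal lt_km); rewrite //= subrr.
Qed.

Lemma Qmrs_dagger_root m (N M : {poly R}) i : (0 < i < m)%N ->
  Qmrs_dagger_repr m N M -> root N (x (r + i%:Z)) && root M (x (r + i%:Z)).
Proof.
move=> /andP[i_gt0 lt_im] repr; set t := x (r + i%:Z).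
have roots : yroots t (y (r + i.-1%:Z)) (y (r + i%:Z)).
  by have := yroots_x (r + i%:Z); rewrite (_ : r + i%:Z - 1 = r + i.-1%:Z) //; lia.
have yp_ym : y (r + i.-1%:Z) != y (r + i%:Z) by apply/eqP => /y_inj /addrI []; lia.
have t_neq j : (j <= m)%N -> t != x' (s + j%:Z) by move=> _; apply/eqP/x_neq_x'.
have prod_neq0 := node_prod_neq0 t_neq.
have [] := repr _ _ _ roots yp_ym t_neq.
rewrite /Ddag /Mdag !Qmrs_y ?(leq_ltn_trans (leq_pred i)) // subrr mul0r oppr0 addr0 mul0r.
move=> /esym/eqP + /esym/eqP.
rewrite !mulf_eq0 invr_eq0 (negbTE (X2_x_neq0 _)) (negbTE prod_neq0) /= !orbF.
by move=> N_t M_t; apply/andP.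
Qed.

Lemma Qmrs_dagger_forms m : (0 < m)%N -> exists (C : R) (D : {poly R}),
  (size D <= 3)%N /\
  forall t yp ym, yroots t yp ym -> yp != ym ->
  (forall j, (j <= m)%N -> t != x' (s + j%:Z)) ->
  Ddag (Qmrs y y' m r s) yp ym = C * X2 t * ratfac x x' m r s t /\
  Mdag (Qmrs y y' m r s) yp ym = D.[t] * ratfac x x' m r s t.
Proof.
move=> m_gt0; have [N [M [size_N size_M repr]]] := Qmrs_dagger_num m.
pose rs := [seq x (r + i%:Z) | i <- iota 1 m.-1].
have rs_uniq : uniq rs by rewrite map_inj_uniq ?iota_uniq // => i j /x_inj /addrI [].
have size_rs : size rs = m.-1 by rewrite size_map size_iota.
have [rs_N rs_M] : all (root N) rs /\ all (root M) rs.
  have rootNM z : z \in rs -> root N z && root M z.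
    case/mapP => i; rewrite mem_iota => /andP[i_gt0 lt_i] ->.
    by apply: Qmrs_dagger_root repr; lia.
  by split; apply/allP => z /rootNM /andP[].
have size_N' : (size N <= size rs + 1)%N by rewrite size_rs; lia.
have size_M' : (size M <= size rs + 3)%N by rewrite size_rs; lia.
have [qN size_qN def_N] := uniq_roots_factor_size rs_uniq rs_N size_N'.
have [qM size_qM def_M] := uniq_roots_factor_size rs_uniq rs_M size_M'.
exists qN`_0, qM; split=> // t yp ym roots yp_ym t_neq.
have [-> ->] := repr t yp ym roots yp_ym t_neq.
have horner_rs : (\prod_(z <- rs) ('X - z%:P)).[t] = \prod_(1 <= i < m) (t - x (r + i%:Z)).
  by rewrite horner_prod big_map /index_iota subn1; apply: eq_bigr => i _; rewrite hornerXsubC.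
have qN_t : qN.[t] = qN`_0 by rewrite [in LHS](size1_polyC size_qN) hornerC.
by rewrite def_N def_M !hornerM horner_rs qN_t /ratfac; split; ring.
Qed.

Lemma Qmrs1_dagger_forms t yp ym : yroots t yp ym -> yp != ym ->
  (forall j, (j <= 1)%N -> t != x' (s + j%:Z)) ->
  Ddag (Qmrs y y' 1 r s) yp ym
    = (y' s - y r) / Y2 (y' s) * X2 t * ratfac x x' 1 r s t /\
  Mdag (Qmrs y y' 1 r s) yp ym
    = ((Y2 (y' s))^-1 *: (Xpol c i0 + ((y r + y' s) / 2) *: Xpol c i1
                          + (y r * y' s) *: Xpol c i2)).[t] * ratfac x x' 1 r s t.
Proof.
move=> roots yp_ym t_neq.
have t_xs : t - x' s != 0 by rewrite subr_eq0 -[s]addr0 (t_neq 0%N).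
have t_xs1 : t - x' (s + 1) != 0 by rewrite subr_eq0 (t_neq 1%N).
have F_ys : F t (y' s) = Y2 (y' s) * (t - x' s) * (t - x' (s + 1)).
  by have := F_y' t 0; rewrite addr0.
have F_ys_neq0 : F t (y' s) != 0 by rewrite F_ys !mulf_neq0.
have [yp_ys ym_ys] := yroots_neq roots F_ys_neq0.
have ratfac1 : ratfac x x' 1 r s t = Y2 (y' s) / F t (y' s).
  rewrite /ratfac big_geq // big_ord_recr big_ord1 /= addr0 F_ys.
  by field; rewrite t_xs t_xs1 Y2_y'_neq0.
have Q_pole u : u != y' s -> Qmrs y y' 1 r s u = 1 + (y' s - y r) * (u - y' s)^-1.
  by move=> u_ys; rewrite /Qmrs !big_ord1 !addr0; field; rewrite subr_eq0.
have -> : Ddag (Qmrs y y' 1 r s) yp ym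
    = (y' s - y r) * Ddag (fun u => (u - y' s)^-1) yp ym.
  by rewrite /Ddag !Q_pole //; field; rewrite !subr_eq0 yp_ym yp_ys ym_ys.
have -> : Mdag (Qmrs y y' 1 r s) yp ym
    = 1 + (y' s - y r) * Mdag (fun u => (u - y' s)^-1) yp ym.
  by rewrite /Mdag !Q_pole //; field; rewrite !subr_eq0 yp_ys ym_ys.
rewrite (Ddag_pole roots) // (Mdag_pole roots) // ratfac1 !hornerE /=.
split; first by field; rewrite F_ys_neq0 Y2_y'_neq0.
by move: F_ys_neq0; rewrite bqF_Xpol => F_ys_neq0; field; rewrite F_ys_neq0 Y2_y'_neq0.
Qed.

End Elliptic_pair.
End Biquadratic.

Theorem mainTheorem15 (R : numClosedFieldType) (c : 'I_3 -> 'I_3 -> R)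
    (x y x' y' : int -> R) :
  elliptic_seq c x y -> elliptic_seq c x' y' ->
  general_position c x y x' y' ->
  forall (m : nat) (r s : int), (0 < m)%N ->
  exists (C : R) (D : {poly R}),
    [/\ (size D <= 3)%N,
        (forall (t yp ym : R),
           (Xpol c i2).[t] != 0 -> yp != ym ->
           (forall u, bqF c t u = (Xpol c i2).[t] * (u - yp) * (u - ym)) ->
           (forall j : nat, (j <= m)%N -> t != x' (s + j%:Z)) ->
           Ddag (Qmrs y y' m r s) yp ym = C * (Xpol c i2).[t] * ratfac x x' m r s t /\
           Mdag (Qmrs y y' m r s) yp ym = D.[t] * ratfac x x' m r s t) &
        (m = 1%N ->
           C = (y' s - y r) / (Ypol c i2).[y' s] /\
           D = ((Ypol c i2).[y' s])^-1 *:
                 (Xpol c i0 + ((y r + y' s) / 2) *: Xpol c i1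
                  + (y r * y' s) *: Xpol c i2))].
Proof.
move=> ell ell' [x_inj [_ [x_x' [y_inj [y'_inj [_ nz]]]]]] m r s m_gt0.
have X2_x n : (Xpol c i2).[x n] != 0 by case: (nz n).
have Y2_y' n : (Ypol c i2).[y' n] != 0 by case: (nz n).
have [-> | m_neq1] := eqVneq m 1%N.
  exists ((y' s - y r) / (Ypol c i2).[y' s]), ((Ypol c i2).[y' s]^-1 *:
    (Xpol c i0 + ((y r + y' s) / 2) *: Xpol c i1 + (y r * y' s) *: Xpol c i2)).
  split=> //; first by rewrite !(size_scale_leqn, size_add_leq) ?size_Xpol.
  by move=> t yp ym _ yp_ym roots; apply: Qmrs1_dagger_forms.
have [C [D [size_D reprCD]]] :=
  Qmrs_dagger_forms ell ell' x_inj y_inj y'_inj x_x' X2_x Y2_y' r s m_gt0.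
exists C, D; split=> // [t yp ym _ yp_ym roots | m_eq1]; first exact: reprCD.
by rewrite m_eq1 eqxx in m_neq1.
Qed.
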